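(* Let $L$ be a totally ordered multiplicative lattice and $m$ a positive integer. (1) If $\{q_\lambda\}_{\lambda\in\Lambda}$ is a family of quasi $m$-absorbing elements of $L$, then $\bigwedge_{\lambda\in\Lambda}q_\lambda$ is a quasi $m$-absorbing element of $L$. (2) If $\{q_\lambda\}_{\lambda\in\Lambda}$ is a family of weakly quasi $m$-absorbing elements of $L$, then $\bigwedge_{\lambda\in\Lambda}q_\lambda$ is a weakly quasi $m$-absorbing element of $L$.
   Context: A multiplicative lattice is a complete lattice $L$ with least element $0$ and compact greatest element $1$, equipped with a commutative, associative product that distributes over arbitrary joins and has $1$ as multiplicative identity; $L$ is totally ordered if any two elements are comparable. An element $a$ is compact if $a\le\bigvee_{\alpha\in I}a_\alpha$ implies $a\le\bigvee_{\alpha\in I_0}a_\alpha$ for some finite $I_0\subseteq I$; $L_*$ denotes the set of compact elements. $a^0=1$. A proper element $q$ ($q<1$) is quasi $m$-absorbing if whenever $a^mb\le q$ for some $a,b\in L_*$, then $a^m\le q$ or $a^{m-1}b\le q$; it is weakly quasi $m$-absorbing if whenever $0\ne a^mb\le q$ for some $a,b\in L_*$, then $a^m\le q$ or $a^{m-1}b\le q$. *)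

From Stdlib Require Import List.

(* A complete lattice is given by a partial order [le] on [T] together with
   a supremum operator [sup] on arbitrary subsets (predicates) of [T]. *)
Section MultLattice.
Variable T : Type.
Variable le : T -> T -> Prop.
Variable sup : (T -> Prop) -> T.
Variable mul : T -> T -> T.

Definition lzero : T := sup (fun _ => False).
Definition lone : T := sup (fun _ => True).
Definition inf_fam (I : Type) (f : I -> T) : T :=
  sup (fun x => forall i, le x (f i)).

Definition compact (a : T) : Prop :=
  forall S : T -> Prop, le a (sup S) ->
    exists l : list T, (forall x, In x l -> S x) /\ le a (sup (fun x => In x l)).

Record is_mult_lattice : Prop := {
  le_refl : forall a, le a a;
  le_trans : forall a b c, le a b -> le b c -> le a c;
  le_antisym : forall a b, le a b -> le b a -> a = b;
  sup_ub : forall (S : T -> Prop) a, S a -> le a (sup S);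
  sup_least : forall (S : T -> Prop) b, (forall a, S a -> le a b) -> le (sup S) b;
  one_compact : compact lone;
  mulC : forall a b, mul a b = mul b a;
  mulA : forall a b c, mul a (mul b c) = mul (mul a b) c;
  mul1 : forall a, mul lone a = a;
  mul_sup : forall a (S : T -> Prop),
      mul a (sup S) = sup (fun y => exists x, S x /\ y = mul a x)
}.

Definition totally_ordered : Prop := forall a b, le a b \/ le b a.

Fixpoint lpow (a : T) (n : nat) : T :=
  match n with
  | O => lone
  | S k => mul a (lpow a k)
  end.

Definition proper (q : T) : Prop := le q lone /\ q <> lone.

Definition quasi_m_absorbing (m : nat) (q : T) : Prop :=
  proper q /\
  forall a b, compact a -> compact b ->
    le (mul (lpow a m) b) q ->
    le (lpow a m) q \/ le (mul (lpow a (m - 1)) b) q.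

Definition weakly_quasi_m_absorbing (m : nat) (q : T) : Prop :=
  proper q /\
  forall a b, compact a -> compact b ->
    mul (lpow a m) b <> lzero -> le (mul (lpow a m) b) q ->
    le (lpow a m) q \/ le (mul (lpow a (m - 1)) b) q.

End MultLattice.


(* In a totally ordered lattice, "x <= q_l or y <= q_l for every l" implies
   "x <= inf q or y <= inf q": the smaller of x and y lies below every q_l.
   Both absorbing conditions are of this form, with x = a^m and y = a^(m-1) b. *)

Section InfFamily.

Variable T : Type.
Variable le : T -> T -> Prop.
Variable sup : (T -> Prop) -> T.
Variable mul : T -> T -> T.
Hypothesis HL : is_mult_lattice T le sup mul.

Let inf (Lam : Type) (q : Lam -> T) : T := inf_fam T le sup Lam q.

Lemma le_lone (x : T) : le x (lone T sup).
Proof. apply (sup_ub _ _ _ _ HL). exact I. Qed.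

Lemma inf_fam_lb (Lam : Type) (q : Lam -> T) (l : Lam) : le (inf Lam q) (q l).
Proof. apply (sup_least _ _ _ _ HL). intros a Ha. apply Ha. Qed.

Lemma inf_fam_glb (Lam : Type) (q : Lam -> T) (x : T) :
  (forall l, le x (q l)) -> le x (inf Lam q).
Proof. intro Hx. apply (sup_ub _ _ _ _ HL). exact Hx. Qed.

Lemma proper_inf_fam (Lam : Type) (q : Lam -> T) :
  inhabited Lam -> (forall l, proper T le sup (q l)) -> proper T le sup (inf Lam q).
Proof.
  intros [l0] Hq. split; [apply le_lone |].
  intro Hinf. apply (proj2 (Hq l0)).
  apply (le_antisym _ _ _ _ HL); [apply le_lone |].
  rewrite <- Hinf. apply inf_fam_lb.
Qed.

Hypothesis Htot : totally_ordered T le.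

Lemma inf_fam_or_total (Lam : Type) (q : Lam -> T) (x y : T) :
  (forall l, le x (q l) \/ le y (q l)) -> le x (inf Lam q) \/ le y (inf Lam q).
Proof.
  intro Hxy.
  destruct (Htot x y) as [Hle | Hle]; [left | right]; apply inf_fam_glb; intro l;
    destruct (Hxy l); eauto using (le_trans _ _ _ _ HL).
Qed.

Lemma quasi_m_absorbing_inf_fam (m : nat) (Lam : Type) (q : Lam -> T) :
  inhabited Lam -> (forall l, quasi_m_absorbing T le sup mul m (q l)) ->
  quasi_m_absorbing T le sup mul m (inf Lam q).
Proof.
  intros Hne Hq. split.
  - apply proper_inf_fam; [exact Hne | intro l; apply (Hq l)].
  - intros a b Ha Hb Hab. apply inf_fam_or_total. intro l.
    apply (proj2 (Hq l)); [exact Ha | exact Hb |].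
    eapply (le_trans _ _ _ _ HL); [exact Hab | apply inf_fam_lb].
Qed.

Lemma weakly_quasi_m_absorbing_inf_fam (m : nat) (Lam : Type) (q : Lam -> T) :
  inhabited Lam -> (forall l, weakly_quasi_m_absorbing T le sup mul m (q l)) ->
  weakly_quasi_m_absorbing T le sup mul m (inf Lam q).
Proof.
  intros Hne Hq. split.
  - apply proper_inf_fam; [exact Hne | intro l; apply (Hq l)].
  - intros a b Ha Hb Hnz Hab. apply inf_fam_or_total. intro l.
    apply (proj2 (Hq l)); [exact Ha | exact Hb | exact Hnz |].
    eapply (le_trans _ _ _ _ HL); [exact Hab | apply inf_fam_lb].
Qed.

End InfFamily.

Theorem mainTheorem7
  (T : Type) (le : T -> T -> Prop) (sup : (T -> Prop) -> T) (mul : T -> T -> T)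
  (HL : is_mult_lattice T le sup mul) (Htot : totally_ordered T le)
  (m : nat) (hm : 0 < m) :
  (forall (Lam : Type) (q : Lam -> T), inhabited Lam ->
     (forall l, quasi_m_absorbing T le sup mul m (q l)) ->
     quasi_m_absorbing T le sup mul m (inf_fam T le sup Lam q))
  /\
  (forall (Lam : Type) (q : Lam -> T), inhabited Lam ->
     (forall l, weakly_quasi_m_absorbing T le sup mul m (q l)) ->
     weakly_quasi_m_absorbing T le sup mul m (inf_fam T le sup Lam q)).
Proof.
  split.
  - exact (quasi_m_absorbing_inf_fam T le sup mul HL Htot m).
  - exact (weakly_quasi_m_absorbing_inf_fam T le sup mul HL Htot m).
Qed.
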